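(* Let $M\in\mathrm{Mat}(d,\mathbb{Z})$ and $n\in\mathbb{N}$, and consider the map $x\mapsto Mx \bmod n$ on $\tilde L_n=(\mathbb{Z}/n\mathbb{Z})^d$. Then for every periodic point $y$ of this map, the pretail graph of $y$ is isomorphic (as a directed graph) to the pretail graph of the fixed point $0$. Reversing all edge directions of the pretail graph of $0$ yields a rooted tree with root $0$, and this tree is trivial (consists of the single vertex $0$) if and only if $M$ is invertible on $\tilde L_n$.
   Context: A point $y\in\tilde L_n$ is periodic if $M^k y\equiv y \pmod n$ for some $k\ge1$. Given a periodic point $y$, a finite set of iterates $\{x, Mx, \dots, M^j x = y\}$ (mod $n$) is called a pretail of $y$ if $y$ is the only periodic point in it; $j$ is its length. The pretail graph of $y$ is the directed graph obtained by combining all pretails of $y$: its vertices are the points of all pretails of $y$, with a directed edge $z\to Mz$ for every vertex $z\neq y$ (so no edge leaves $y$). *)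

From mathcomp Require Import all_boot all_order all_algebra.
Set Implicit Arguments. Unset Strict Implicit. Unset Printing Implicit Defensive.
Import GRing.Theory Num.Theory.

(* Points of L_n = (Z/nZ)^d, coordinates represented by 'I_n (requires 0 < n). *)
Definition pt (d n : nat) := {ffun 'I_d -> 'I_n}.

Definition pt0 (d n : nat) (hn : 0 < n) : pt d n := [ffun _ => Ordinal hn].

(* The map x |-> M x mod n. The int (M x)_i is reduced mod n (nonneg. residue),
   then taken as a nat (the extra nat %% n is the identity, it only provides the bound). *)
Definition Mmap (d n : nat) (hn : 0 < n) (M : 'M[int]_d) (x : pt d n) : pt d n :=
  [ffun i => Ordinal (ltn_pmod
     (absz ((\sum_(j < d) M i j * ((x j : nat)%:Z)) %% (n%:Z))%Z) hn)].

Section Dyn.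
Variable T : finType.
Variable f : T -> T.

Definition periodic (y : T) : Prop := exists k, 0 < k /\ iter k f y = y.

Definition in_pretail (y x : T) : Prop :=
  exists j, iter j f x = y /\ forall i, i < j -> ~ periodic (iter i f x).

Definition pretail_V (y : T) : T -> Prop := in_pretail y.

Definition pretail_E (y : T) : T -> T -> Prop :=
  fun z w => pretail_V y z /\ z <> y /\ w = f z.

End Dyn.

Definition digraph_iso (T : Type) (V1 : T -> Prop) (E1 : T -> T -> Prop)
  (V2 : T -> Prop) (E2 : T -> T -> Prop) : Prop :=
  exists phi : T -> T,
    [/\ forall u v, V1 u -> V1 v -> phi u = phi v -> u = v,
        (forall w, V2 w <-> exists2 u, V1 u & phi u = w) &
        (forall u v, V1 u -> V1 v -> (E1 u v <-> E2 (phi u) (phi v)))].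

Definition rev_rel (T : Type) (E : T -> T -> Prop) : T -> T -> Prop :=
  fun u v => E v u.

Fixpoint walk (T : Type) (E : T -> T -> Prop) (x : T) (p : seq T) : Prop :=
  match p with
  | [::] => True
  | y :: q => E x y /\ walk E y q
  end.

Definition rooted_tree (T : Type) (V : T -> Prop) (E : T -> T -> Prop) (r : T) : Prop :=
  [/\ V r,
      (forall u v, E u v -> V u /\ V v) &
      (forall v, V v ->
        (exists p, walk E r p /\ last r p = v) /\
        (forall p q, walk E r p -> last r p = v ->
                     walk E r q -> last r q = v -> p = q))].

(** Since [L_n] is finite, some iterate [E := f^e] of the additive map
    [f : x |-> M x mod n] is idempotent; the periodic points are exactly the
    fixed points of [E], and [N := id - E] is an additive projection onto
    [ker E] commuting with [f]. A point lies on a pretail of the periodic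
    point [y], reaching it after [j] steps, iff [j] is the first time its
    [N]-component is killed by [f]; since its [E]-component is then forced to
    be [f^(je - j) y], the map [N] is a graph isomorphism from the pretail
    graph of [y] onto that of [0]. Every vertex other than the root has a
    single out-edge and reaches the root, so reversing the edges gives a
    tree; and the tree of [0] is trivial iff [ker f = 0], i.e. iff [f] is
    bijective. *)

From HB Require Import structures.
From mathcomp Require Import all_boot all_order all_algebra zify.
Set Implicit Arguments. Unset Strict Implicit. Unset Printing Implicit Defensive.
Import GRing.Theory.

Definition first_time (P : nat -> Prop) (j : nat) := P j /\ forall i, i < j -> ~ P i.

Lemma first_time_unique P j k : first_time P j -> first_time P k -> j = k.
Proof.
move=> [Pj before_j] [Pk before_k].
by case: (ltngtP j k) => // [/before_k | /before_j].
Qed.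

Lemma walk_rcons (T : Type) (R : T -> T -> Prop) x p z :
  walk R x (rcons p z) <-> walk R x p /\ R (last x p) z.
Proof.
elim: p x => [|a p IH] x /=; first by split=> [[]|[]].
by rewrite IH; split=> [[? [? ?]]|[[? ?] ?]].
Qed.

Section IteratesOnFiniteType.
Variables (T : finType) (f : T -> T).

Lemma iter_period_shift a p :
    (forall x, iter (p + a) f x = iter a f x) ->
  forall k m x, a <= m -> iter (k * p + m) f x = iter m f x.
Proof.
move=> per k m x le_am; elim: k => // k IH.
have -> : k.+1 * p + m = k * p + (m - a) + (p + a) by rewrite mulSn; lia.
by rewrite iterD per -iterD -IH; congr iter; lia.
Qed.

Lemma iter_idempotent :
  exists2 e, 0 < e & forall x, iter e f (iter e f x) = iter e f x.
Proof.
have [a [p p_gt0 per]] :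
    exists a, exists2 p, 0 < p & forall x, iter (p + a) f x = iter a f x.
  pose g (k : 'I_#|{ffun T -> T}|.+1) := [ffun x => iter k f x].
  have /injectivePn [i [j neq_ij gij]] : ~~ injectiveb g.
    by apply/injectiveP => /leq_card; rewrite card_ord ltnn.
  have iter_ij x : iter i f x = iter j f x.
    by have := congr1 (fun h : {ffun T -> T} => h x) gij; rewrite !ffunE.
  case: (ltngtP i j) => [lt_ij | lt_ji | /val_inj eq_ij].
  - exists i, (j - i) => [|x]; first by rewrite subn_gt0.
    by rewrite subnK ?iter_ij // ltnW.
  - exists j, (i - j) => [|x]; first by rewrite subn_gt0.
    by rewrite subnK ?iter_ij // ltnW.
  - by rewrite eq_ij eqxx in neq_ij.
exists (a.+1 * p) => [|x]; first by rewrite muln_gt0.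
rewrite -iterD (iter_period_shift per) //.
by rewrite (leq_trans (leqnSn a)) // leq_pmulr.
Qed.

Section IdempotentIterate.
Variable e : nat.
Hypotheses (e_gt0 : 0 < e)
           (iter_e_idem : forall x, iter e f (iter e f x) = iter e f x).

Lemma iter_mul_idem k x : 0 < k -> iter (k * e) f x = iter e f x.
Proof.
elim: k => [//|[|k] IH _]; first by rewrite mul1n.
by rewrite mulSn iterD IH.
Qed.

Lemma periodicE y : periodic f y <-> iter e f y = y.
Proof.
split=> [[k [k_gt0 iter_ky]]|iter_ey]; last by exists e.
have iter_mky m : iter (m * k) f y = y.
  by elim: m => // m IH; rewrite mulSn iterD IH iter_ky.
by rewrite -(iter_mul_idem y k_gt0) mulnC iter_mky.
Qed.

Lemma iter_e_from j u : iter e f u = iter (j.+1 * e - j) f (iter j f u).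
Proof.
rewrite -iterD subnK ?iter_mul_idem //.
by rewrite (leq_trans (leqnSn j)) // leq_pmulr.
Qed.

End IdempotentIterate.

Lemma pretail_f y u : in_pretail f y u -> u <> y -> in_pretail f y (f u).
Proof.
move=> [[|j] [iter_ju not_per]] neq_uy //.
exists j; split=> [|i lt_ij]; rewrite -iterSr //.
exact: not_per.
Qed.

Lemma pretail_walk_unique y p q v :
    walk (rev_rel (pretail_E f y)) y p -> last y p = v ->
    walk (rev_rel (pretail_E f y)) y q -> last y q = v -> p = q.
Proof.
elim/last_ind: p q v => [|p a IH] q v.
  move=> _ /= <-; case/lastP: q => [//|q b] /walk_rcons [_ [_ [neq_by _]]].
  by rewrite last_rcons.
rewrite last_rcons => /walk_rcons [walk_p [_ [neq_ay last_p]]] eq_av.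
case/lastP: q => [|q b] /=; first by move=> _ eq_yv; case: neq_ay; rewrite eq_av.
move=> /walk_rcons [walk_q [_ [_ last_q]]]; rewrite last_rcons => eq_bv.
have eq_ab : a = b by rewrite eq_av eq_bv.
by rewrite -eq_ab (IH q (f a)) // last_q eq_ab.
Qed.

Lemma pretail_walk_exists y v : periodic f y -> in_pretail f y v ->
  exists p, walk (rev_rel (pretail_E f y)) y p /\ last y p = v.
Proof.
move=> per_y [j]; elim: j v => [|j IH] v [iter_jv not_per].
  by exists [::].
have [|p [walk_p last_p]] := IH (f v).
  by split=> [|i lt_ij]; rewrite -iterSr //; apply: not_per.
exists (rcons p v); rewrite last_rcons walk_rcons last_p.
split=> //; split=> //; split; first by exists j.+1.
by split=> // eq_vy; apply: (not_per 0); rewrite //= eq_vy.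
Qed.

Lemma pretail_rooted_tree y : periodic f y ->
  rooted_tree (pretail_V f y) (rev_rel (pretail_E f y)) y.
Proof.
move=> per_y; split.
- by exists 0.
- by move=> u v [pre_v [neq_vy ->]]; split=> //; apply: pretail_f.
- move=> v pre_v; split; first exact: pretail_walk_exists.
  by move=> p q; apply: pretail_walk_unique.
Qed.

Lemma pretail_injective y x : injective f -> in_pretail f y x -> x = y.
Proof.
move=> f_inj [[|j] [iter_jx not_per]] //; case: (not_per 0 isT).
by exists (order f x); rewrite order_gt0 iter_order.
Qed.

End IteratesOnFiniteType.

Section AdditiveIterates.
Variables (V : finZmodType) (f : V -> V).
Hypothesis f_add : {morph f : x y / (x + y)%R}.
Local Open Scope ring_scope.

Lemma iter_addm k : {morph iter k f : x y / x + y}.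
Proof. by elim: k => // k IH x y /=; rewrite IH f_add. Qed.

Lemma iter_subm k : {morph iter k f : x y / x - y}.
Proof. by move=> x y; apply/eqP; rewrite eq_sym subr_eq -iter_addm subrK. Qed.

Lemma iter_f0 k : iter k f 0 = 0.
Proof. by have := iter_subm k 0 0; rewrite subrr => ->; rewrite subrr. Qed.

Lemma periodic0 : periodic f 0.
Proof. by exists 1%N; rewrite (iter_f0 1). Qed.

Section NilpotentPart.
Variable e : nat.
Hypotheses (e_gt0 : (0 < e)%N)
           (iter_e_idem : forall x, iter e f (iter e f x) = iter e f x).

Let nilpart x := x - iter e f x.

Lemma iter_e_nilpart x : iter e f (nilpart x) = 0.
Proof. by rewrite iter_subm iter_e_idem subrr. Qed.

Lemma nilpart_idem x : nilpart (nilpart x) = nilpart x.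
Proof. by rewrite {1}/nilpart iter_e_nilpart subr0. Qed.

Lemma nilpart_iter i x : nilpart (iter i f x) = iter i f (nilpart x).
Proof. by rewrite /nilpart iter_subm -!iterD addnC. Qed.

Lemma periodic_iterE i x : periodic f (iter i f x) <-> iter i f (nilpart x) = 0.
Proof.
rewrite (periodicE e_gt0 iter_e_idem) -nilpart_iter /nilpart.
by split=> [->|/eqP]; rewrite ?subrr // subr_eq0 => /eqP <-.
Qed.

Lemma pretailE y x : periodic f y -> in_pretail f y x <->
  exists j, iter j f x = y /\ first_time (fun i => iter i f (nilpart x) = 0) j.
Proof.
move=> per_y; split=> [] [j [iter_jx before_j]]; exists j; split=> //.
  split; first by apply/periodic_iterE; rewrite iter_jx.
  by move=> i lt_ij /periodic_iterE; apply: before_j.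
by move=> i lt_ij /periodic_iterE; apply: before_j.2.
Qed.

Lemma nilpartK x : nilpart x + iter e f x = x.
Proof. exact: subrK. Qed.

Lemma nilpart_f x : nilpart (f x) = f (nilpart x).
Proof. exact: (nilpart_iter 1). Qed.

Lemma pretail_nilpart y u : periodic f y -> in_pretail f y u -> in_pretail f 0 (nilpart u).
Proof.
move=> per_y /(pretailE _ per_y) [j [_ first_j]].
apply/(pretailE _ periodic0); exists j.
by rewrite nilpart_idem; split=> //; apply: first_j.1.
Qed.

Lemma pretail_nilpart_root y u : periodic f y -> in_pretail f y u ->
  nilpart u = 0 <-> u = y.
Proof.
move=> per_y pre_u; split=> [nil_u0 | ->].
  move: pre_u => /(pretailE _ per_y) [[|j] [iter_ju [_ before_j]]] //.
  by case: (before_j 0%N).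
by rewrite /nilpart (periodicE e_gt0 iter_e_idem y).1 // subrr.
Qed.

Lemma pretail_nilpart_inj y u v : periodic f y ->
  in_pretail f y u -> in_pretail f y v -> nilpart u = nilpart v -> u = v.
Proof.
move=> per_y /(pretailE _ per_y) [j [iter_ju first_j]].
move=> /(pretailE _ per_y) [k [iter_kv first_k]] eq_uv.
have eq_jk : j = k by apply: first_time_unique first_j _; rewrite eq_uv.
rewrite -(nilpartK u) -(nilpartK v) eq_uv.
by rewrite !(iter_e_from e_gt0 iter_e_idem j) iter_ju eq_jk iter_kv.
Qed.

Lemma pretail_nilpart_surj y w : periodic f y -> in_pretail f 0 w ->
  exists2 u, in_pretail f y u & nilpart u = w.
Proof.
move=> per_y /(pretailE _ periodic0) [j [iter_jw first_j]].
have iter_ey : iter e f y = y by apply/(periodicE e_gt0 iter_e_idem).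
have le_je : (j <= j.+1 * e)%N by rewrite (leq_trans (leqnSn j)) // leq_pmulr.
pose b := iter (j.+1 * e - j) f y.
have iter_eb : iter e f b = b by rewrite /b -iterD addnC iterD iter_ey.
have iter_ew : iter e f w = 0.
  by rewrite (iter_e_from e_gt0 iter_e_idem j) iter_jw iter_f0.
have nil_w : nilpart w = w by rewrite /nilpart iter_ew subr0.
have nil_wb : nilpart (w + b) = w.
  by rewrite /nilpart iter_addm iter_ew iter_eb add0r addrK.
exists (w + b) => //; apply/(pretailE _ per_y); exists j.
rewrite nil_wb -{2}nil_w; split=> //.
by rewrite iter_addm iter_jw add0r /b -iterD subnKC // iter_mul_idem.
Qed.

Lemma pretail_iso y : periodic f y ->
  digraph_iso (pretail_V f y) (pretail_E f y) (pretail_V f 0) (pretail_E f 0).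
Proof.
move=> per_y; exists nilpart; split.
- by move=> u v; apply: pretail_nilpart_inj.
- move=> w; split; first exact: pretail_nilpart_surj per_y.
  by case=> u pre_u <-; apply: pretail_nilpart per_y pre_u.
- move=> u v pre_u pre_v; have root_u := pretail_nilpart_root per_y pre_u.
  split=> [[_ [neq_uy ->]] | [_ [nil_u_neq0 eq_v]]].
    split; first exact: pretail_nilpart per_y _.
    by split; [move/root_u | exact: nilpart_f].
  have neq_uy : u <> y by move/root_u.
  split=> //; split=> //; apply: pretail_nilpart_inj per_y pre_v _ _.
    exact: pretail_f.
  by rewrite eq_v nilpart_f.
Qed.

End NilpotentPart.

Lemma pretail0_trivialP : (forall x, pretail_V f 0 x <-> x = 0) <-> bijective f.
Proof.
split=> [triv | /bij_inj f_inj x]; last first.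
  by split=> [/(pretail_injective f_inj) | ->] //; exists 0%N.
have ker_periodic a : f a = 0 -> periodic f a -> a = 0.
  by move=> fa0 [k [k_gt0 <-]]; rewrite -(prednK k_gt0) iterSr fa0 iter_f0.
apply: injF_bij => x y eq_fxy; apply/eqP; rewrite -subr_eq0; apply/eqP.
have f_xy : f (x - y) = 0 by have /= -> := iter_subm 1 x y; rewrite eq_fxy subrr.
case: (eqVneq (x - y) 0) => // neq0; apply/triv; exists 1%N.
by split=> // [[|//] _ /(ker_periodic _ f_xy)]; apply/eqP.
Qed.

End AdditiveIterates.

(* MathComp declares no [finZmodType] instance for [{ffun aT -> rT}]. *)
HB.saturate finfun_of.

Section MatrixMapModN.
Variables (d n : nat) (n_gt0 : 0 < n.+1) (M : 'M[int]_d).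
Local Open Scope ring_scope.

Definition int_mod (z : int) : 'I_n.+1 :=
  Ordinal (ltn_pmod (absz (z %% n.+1%:Z))%Z n_gt0).

Lemma int_modE z : (int_mod z : nat)%:Z = (z %% n.+1%:Z)%Z.
Proof. by rewrite /= -modz_nat gez0_abs ?modz_mod //; apply: modz_ge0. Qed.

Lemma int_modD : {morph int_mod : a b / a + b}.
Proof.
move=> a b; apply/val_inj/eqP; rewrite -eqz_nat int_modE.
have -> : val (int_mod a + int_mod b) = ((int_mod a + int_mod b) %% n.+1)%N by [].
by rewrite -modz_nat PoszD !int_modE modzDm.
Qed.

Lemma int_mod_sum (F : 'I_d -> int) : int_mod (\sum_j F j) = \sum_j int_mod (F j).
Proof. by apply: (big_morph int_mod int_modD); apply: val_inj. Qed.

Lemma int_mod_congr a b : (a = b %[mod n.+1])%Z -> int_mod a = int_mod b.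
Proof. by move=> eq_ab; apply: val_inj; rewrite /= eq_ab. Qed.

Lemma MmapE x i : Mmap n_gt0 M x i = int_mod (\sum_j M i j * (x j : nat)%:Z).
Proof. by rewrite ffunE. Qed.

Lemma Mmap_add : {morph Mmap n_gt0 M : x y / x + y}.
Proof.
move=> x y; apply/ffunP => i; rewrite [RHS]ffunE !MmapE !int_mod_sum -big_split.
apply: eq_bigr => j _ /=; rewrite -int_modD; apply: int_mod_congr.
have -> : val ((x + y) j) = ((x j + y j) %% n.+1)%N by rewrite ffunE.
by rewrite -modz_nat modzMmr PoszD mulrDr.
Qed.

End MatrixMapModN.

Theorem corollary3p3 (d n : nat) (hn : 0 < n) (M : 'M[int]_d) :
  let f := Mmap hn M in
  let o := pt0 d hn in
  (forall y : pt d n, periodic f y ->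
     digraph_iso (pretail_V f y) (pretail_E f y) (pretail_V f o) (pretail_E f o))
  /\ rooted_tree (pretail_V f o) (rev_rel (pretail_E f o)) o
  /\ ((forall x, pretail_V f o x <-> x = o) <-> bijective f).
Proof.
case: n hn M => [//|n] hn M f o.
have -> : o = 0%R by apply/ffunP => i; rewrite !ffunE; apply: val_inj.
have f_add : {morph f : x y / (x + y)%R} := Mmap_add hn M.
have [e e_gt0 iter_e_idem] := iter_idempotent f.
split; [|split].
- move=> y; exact: (pretail_iso f_add e_gt0 iter_e_idem).
- exact/pretail_rooted_tree/(periodic0 f_add).
- exact: pretail0_trivialP f_add.
Qed.
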